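(* Let $L_s,L_t\ge 0$ be integers and $M,N$ positive integers with $\gcd(M,N)=1$, and suppose $N<L_t+1$ and $M<L_s+1$. Let $\bm\Omega_s$ be the $(L_t+1)\times(L_s+1)$ matrix with $(l,p)$-th entry $lM+pN$, $0\le l\le L_t$, $0\le p\le L_s$. Then the number of holes of $\bm\Omega_s$, i.e. the number of integers in $[0, L_tM+L_sN]$ that are not equal to any entry of $\bm\Omega_s$, is $(M-1)(N-1)$. *)

From mathcomp Require Import all_boot all_algebra.
Set Implicit Arguments. Unset Strict Implicit. Unset Printing Implicit Defensive.

Definition Omega_s (Lt Ls M N : nat) : 'M[nat]_(Lt.+1, Ls.+1) :=
  \matrix_(l < Lt.+1, p < Ls.+1) (l * M + p * N)%N.

Definition num_holes (Lt Ls M N : nat) : nat :=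
  #|[set k : 'I_(Lt * M + Ls * N).+1 |
      [forall l : 'I_Lt.+1, forall p : 'I_Ls.+1,
         Omega_s Lt Ls M N l p != (k : nat)]]|.

From mathcomp Require Import all_boot all_algebra zify.
Set Implicit Arguments. Unset Strict Implicit. Unset Printing Implicit Defensive.

(* Since gcd(M, N) = 1, two representations l M + p N = l' M + p' N with l' < l
   differ by a multiple of (N, -M).  Hence each entry of Omega_s has exactly one
   "reduced" position (l, p), with l < N or p > Ls - M: from any position, trade
   N copies of M for M copies of N until it is reduced.  The entries are thus
   counted by the reduced positions, whose complement is the rectangle
   [N, Lt] x [0, Ls - M]; so there are (Lt+1)(Ls+1) - (Lt+1-N)(Ls+1-M) distinct
   entries among the Lt M + Ls N + 1 candidates, leaving (M-1)(N-1) holes. *)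

Lemma card_ord_geq n a : #|[set i : 'I_n | a <= i]| = n - a.
Proof.
rewrite -sum1_card big_mkcond /=; under eq_bigr do rewrite inE.
elim: n => [|n IHn]; first by rewrite big_ord0.
by rewrite big_ord_recr /= IHn; case: leqP => /=; lia.
Qed.

Lemma card_ord_addn_lt n a : #|[set i : 'I_n | i + a < n]| = n - a.
Proof.
rewrite -(card_ord_geq n a) -(card_imset _ (@rev_ord_inj n)).
apply: eq_card => i; rewrite !inE; apply/imsetP/idP => [[j] | le_ai].
  by rewrite inE => lt_jan -> /=; lia.
by exists (rev_ord i); rewrite ?rev_ordK // inE /=; have := ltn_ord i; lia.
Qed.

Section ReducedPositions.

Variables M N Ls : nat.
Hypothesis N_gt0 : 0 < N.

Definition reduced l p := (l < N) || (Ls < p + M).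

Lemma exists_reduced_lin_comb l p : p <= Ls ->
  exists l' p', [/\ l' <= l, p' <= Ls, reduced l' p' &
                    l' * M + p' * N = l * M + p * N].
Proof.
elim/ltn_ind: l p => l IHl p le_pLs.
have [red_lp | ] := boolP (reduced l p); first by exists l, p.
rewrite /reduced negb_or -!leqNgt => /andP[le_Nl le_pMLs].
have lt_lNl : l - N < l by lia.
have [l' [p' [le_l' le_p' red' eq_lin]]] := IHl (l - N) lt_lNl (p + M) le_pMLs.
exists l', p'; split=> //; first lia.
have le_NMlM : N * M <= l * M by rewrite leq_mul2r le_Nl orbT.
by rewrite eq_lin mulnBl mulnDl (mulnC M N); lia.
Qed.

Hypotheses (M_gt0 : 0 < M) (coMN : coprime M N).

Lemma coprime_lin_comb_gap l p l' p' :
  l' < l -> l * M + p * N = l' * M + p' * N -> N <= l - l' /\ p + M <= p'.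
Proof.
move=> lt_l'l eq_lin.
have eq_diff : (l - l') * M = (p' - p) * N by rewrite !mulnBl; lia.
have N_dvd : N %| l - l'.
  by rewrite -(@Gauss_dvdl _ _ M) 1?coprime_sym // eq_diff dvdn_mull.
have M_dvd : M %| p' - p.
  by rewrite -(@Gauss_dvdl _ _ N) // -eq_diff dvdn_mull.
have lt0_p'p : 0 < p' - p.
  by rewrite -(ltn_pmul2r N_gt0) -eq_diff muln_gt0 subn_gt0 lt_l'l.
split; first by apply: dvdn_leq; rewrite ?subn_gt0.
by have := dvdn_leq lt0_p'p M_dvd; lia.
Qed.

Lemma reduced_lin_comb_inj l p l' p' :
  p <= Ls -> p' <= Ls -> reduced l p -> reduced l' p' ->
  l * M + p * N = l' * M + p' * N -> l = l' /\ p = p'.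
Proof.
rewrite /reduced => le_pLs le_p'Ls red red' eq_lin.
case: (ltngtP l l') => [lt_ll' | lt_l'l | eq_ll'].
- by have [] := coprime_lin_comb_gap lt_ll' (esym eq_lin); lia.
- by have [] := coprime_lin_comb_gap lt_l'l eq_lin; lia.
- by move: eq_lin; rewrite eq_ll' => /addnI /eqP; rewrite eqn_pmul2r // => /eqP.
Qed.

End ReducedPositions.

Section Holes.

Variables Lt Ls M N : nat.

Let T := Lt * M + Ls * N.

Definition entry (x : 'I_Lt.+1 * 'I_Ls.+1) : 'I_T.+1 := inord (x.1 * M + x.2 * N).

Lemma entryE x : entry x = x.1 * M + x.2 * N :> nat.
Proof.
by rewrite inordK // ltnS leq_add // leq_mul2r -ltnS ltn_ord orbT.
Qed.

Definition reduced_pos := [set x : 'I_Lt.+1 * 'I_Ls.+1 | reduced M N Ls x.1 x.2].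

Lemma card_reduced_pos :
  #|reduced_pos| = Lt.+1 * Ls.+1 - (Lt.+1 - N) * (Ls.+1 - M).
Proof.
have compl :
    ~: reduced_pos = setX [set l : 'I_Lt.+1 | N <= l] [set p : 'I_Ls.+1 | p + M < Ls.+1].
  by apply/setP => -[l p]; rewrite !inE /reduced /= negb_or -!leqNgt.
have := cardsC reduced_pos.
by rewrite compl cardsX card_ord_geq card_ord_addn_lt card_prod !card_ord; lia.
Qed.

Hypothesis N_gt0 : 0 < N.

Lemma holes_compl_entries :
  [set k : 'I_T.+1 | [forall l, forall p, Omega_s Lt Ls M N l p != k :> nat]]
  = ~: (entry @: reduced_pos).
Proof.
apply/setP => k; rewrite !inE.
apply/forallP/negP => [no_entry /imsetP[x _ eq_k] | not_entry l].
  by have /forallP/(_ x.2) := no_entry x.1; rewrite mxE eq_k entryE eqxx.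
apply/forallP => p; rewrite mxE; apply/eqP => eq_k; apply: not_entry; apply/imsetP.
have [l' [p' [le_l' le_p' red eq_lin]]] :=
  exists_reduced_lin_comb M N_gt0 l (ltn_ord p : p <= Ls).
have lt_l' : l' < Lt.+1 by apply: leq_ltn_trans le_l' (ltn_ord l).
exists (Ordinal lt_l', Ordinal (le_p' : p' < Ls.+1)); first by rewrite inE.
by apply: ord_inj; rewrite entryE /= eq_lin eq_k.
Qed.

Hypotheses (M_gt0 : 0 < M) (coMN : coprime M N).

Lemma entry_inj : {in reduced_pos &, injective entry}.
Proof.
move=> [l p] [l' p']; rewrite !inE /= => red red' /(congr1 (@nat_of_ord _)).
rewrite !entryE /= => eq_lin.
have le_Ls (q : 'I_Ls.+1) : q <= Ls by rewrite -ltnS.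
by case: (reduced_lin_comb_inj N_gt0 M_gt0 coMN (le_Ls p) (le_Ls p') red red' eq_lin)
  => /val_inj -> /val_inj ->.
Qed.

End Holes.

Lemma holes_count_arith Lt Ls M N h : 0 < M -> 0 < N -> N <= Lt -> M <= Ls ->
  Lt.+1 * Ls.+1 - (Lt.+1 - N) * (Ls.+1 - M) + h = (Lt * M + Ls * N).+1 ->
  h = (M - 1) * (N - 1).
Proof.
case: M N => [|m] [|n] // _ _ /subnKC <- /subnKC <-.
move: (Lt - n.+1) (Ls - m.+1) => a b.
rewrite -!addnS !addKn !subn1 /=.
nia.
Qed.

Theorem lemma2 (Ls Lt M N : nat) :
  (0 < M)%N -> (0 < N)%N -> coprime M N ->
  (N < Lt + 1)%N -> (M < Ls + 1)%N ->
  num_holes Lt Ls M N = ((M - 1) * (N - 1))%N.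
Proof.
move=> M_gt0 N_gt0 coMN lt_NLt lt_MLs.
have le_NLt : N <= Lt by rewrite -ltnS -[Lt.+1]addn1.
have le_MLs : M <= Ls by rewrite -ltnS -[Ls.+1]addn1.
apply: (holes_count_arith M_gt0 N_gt0 le_NLt le_MLs).
rewrite -card_reduced_pos -(card_in_imset (entry_inj N_gt0 M_gt0 coMN)).
by rewrite /num_holes holes_compl_entries // cardsC card_ord.
Qed.
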